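(* Let $\beta\ge0$ and $n>0$ be integers. Then $$C_\beta(n)=\sum_{\substack{d\mid (n+\beta)\\ \beta d<n+\beta}} E(d),$$ where $d$ ranges over positive divisors of $n+\beta$.
   Context: Define on triples of integers $\Gamma_{\beta,1}(\tau_1,\tau_2,\tau_3)=(\tau_2,\tau_3,\tau_2+\tau_3+\beta)$ and $\Gamma_{\beta,2}(\tau_1,\tau_2,\tau_3)=(\tau_1,\tau_3,\tau_1+\tau_3+\beta)$. For integers $\alpha\ge1$, $\beta\ge0$, the $(\alpha,\beta)$-Euclid tree is the set of triples obtained from the root $(\alpha,\alpha,2\alpha+\beta)$ by finitely many (possibly zero) applications of $\Gamma_{\beta,1},\Gamma_{\beta,2}$; $\max T$ is the largest entry of $T$. Define $C_\beta(n)=\#\{T: T\text{ is on the }(\alpha,\beta)\text{-Euclid tree for some integer }\alpha\ge1,\ \max T=n\}+1$ (distinct triples counted). Define $E(1)=1$ and, for $n\ge2$, $E(n)=\#\{T: T\text{ is on the }(1,0)\text{-Euclid tree},\ \max T=n\}$. *)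

From Stdlib Require Import ClassicalEpsilon.
From mathcomp Require Import all_boot.
Set Implicit Arguments. Unset Strict Implicit. Unset Printing Implicit Defensive.

(* Triples (tau1, tau2, tau3), all entries are positive on an Euclid tree
   with alpha >= 1, beta >= 0, so nat is used. *)
Definition triple := (nat * nat * nat)%type.

Definition Gamma1 (beta : nat) (T : triple) : triple :=
  let: (t1, t2, t3) := T in (t2, t3, t2 + t3 + beta).
Definition Gamma2 (beta : nat) (T : triple) : triple :=
  let: (t1, t2, t3) := T in (t1, t3, t1 + t3 + beta).

Inductive on_tree (alpha beta : nat) : triple -> Prop :=
| on_tree_root : on_tree alpha beta (alpha, alpha, 2 * alpha + beta)
| on_tree_G1 T : on_tree alpha beta T -> on_tree alpha beta (Gamma1 beta T)
| on_tree_G2 T : on_tree alpha beta T -> on_tree alpha beta (Gamma2 beta T).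

Definition tmax (T : triple) : nat := maxn T.1.1 (maxn T.1.2 T.2).

Definition pb (P : Prop) : bool :=
  if excluded_middle_informative P then true else false.

(* number of triples T with max T = n satisfying P; such triples have all
   entries <= n, so enumerating 'I_n.+1 ^3 is exhaustive *)
Definition count_max (P : triple -> Prop) (n : nat) : nat :=
  #|[set T : 'I_n.+1 * 'I_n.+1 * 'I_n.+1 |
      let U : triple := (val T.1.1, val T.1.2, val T.2) in
      pb (P U) && (tmax U == n)]|.

Definition C (beta n : nat) : nat :=
  count_max (fun T => exists alpha, 1 <= alpha /\ on_tree alpha beta T) n + 1.

Definition E (n : nat) : nat :=
  if n == 1 then 1 else count_max (on_tree 1 0) n.

From Stdlib Require Import ClassicalEpsilon.
From mathcomp Require Import all_boot zify.

(* Adding beta to every entry turns Gamma_{beta,i} into Gamma_{0,i} and the root of the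
   (alpha,beta)-tree into the root of the (alpha+beta,0)-tree, and the (k,0)-tree is k
   times the (1,0)-tree.  Hence the triples counted by C_beta(n) - 1 are the k S - beta
   with S on the (1,0)-tree, k > beta and k max S = n + beta.  The last two entries of S
   are coprime, so d = max S can be read off the triple; grouping by d gives one copy
   of the (1,0)-tree triples of maximum d for each divisor d of n + beta with
   beta d < n + beta.  Their number is E(d), except that E(1) = 1 while no such triple
   has maximum 1: this accounts for the + 1 in C_beta(n). *)

Set Implicit Arguments. Unset Strict Implicit. Unset Printing Implicit Defensive.

Definition shift (b : nat) (T : triple) : triple := (T.1.1 + b, T.1.2 + b, T.2 + b).
Definition scale (k : nat) (S : triple) : triple := (k * S.1.1, k * S.1.2, k * S.2).

Lemma shift_Gamma1 b T : shift b (Gamma1 b T) = Gamma1 0 (shift b T).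
Proof. by case: T => [[t1 t2] t3]; rewrite /shift /=; congr (_, _, _); lia. Qed.

Lemma shift_Gamma2 b T : shift b (Gamma2 b T) = Gamma2 0 (shift b T).
Proof. by case: T => [[t1 t2] t3]; rewrite /shift /=; congr (_, _, _); lia. Qed.

Lemma scale_Gamma1 k S : scale k (Gamma1 0 S) = Gamma1 0 (scale k S).
Proof. by case: S => [[s1 s2] s3]; rewrite /scale /= !addn0 mulnDr. Qed.

Lemma scale_Gamma2 k S : scale k (Gamma2 0 S) = Gamma2 0 (scale k S).
Proof. by case: S => [[s1 s2] s3]; rewrite /scale /= !addn0 mulnDr. Qed.

Lemma on_tree_shift a b T : on_tree a b T -> on_tree (a + b) 0 (shift b T).
Proof.
elim=> [|{}T _ IH|{}T _ IH]; last 2 first.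
- by rewrite shift_Gamma1; apply: on_tree_G1.
- by rewrite shift_Gamma2; apply: on_tree_G2.
have -> : shift b (a, a, 2 * a + b) = (a + b, a + b, 2 * (a + b) + 0).
  by rewrite /shift /=; congr (_, _, _); lia.
exact: on_tree_root.
Qed.

Lemma on_tree_unshift a b U :
  on_tree (a + b) 0 U -> exists2 T, on_tree a b T & U = shift b T.
Proof.
elim=> [|{}U _ [T tT ->]|{}U _ [T tT ->]].
- exists (a, a, 2 * a + b); first exact: on_tree_root.
  by rewrite /shift /=; congr (_, _, _); lia.
- by exists (Gamma1 b T); [apply: on_tree_G1 | rewrite shift_Gamma1].
- by exists (Gamma2 b T); [apply: on_tree_G2 | rewrite shift_Gamma2].
Qed.

Lemma on_tree_scale k S : on_tree 1 0 S -> on_tree k 0 (scale k S).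
Proof.
elim=> [|{}S _ IH|{}S _ IH]; last 2 first.
- by rewrite scale_Gamma1; apply: on_tree_G1.
- by rewrite scale_Gamma2; apply: on_tree_G2.
by rewrite /scale /= muln1 mulnC -[2 * k]addn0; apply: on_tree_root.
Qed.

Lemma on_tree_unscale k U :
  on_tree k 0 U -> exists2 S, on_tree 1 0 S & U = scale k S.
Proof.
elim=> [|{}U _ [S tS ->]|{}U _ [S tS ->]].
- exists (1, 1, 2); first exact: on_tree_root.
  by rewrite /scale /= muln1 mulnC addn0.
- by exists (Gamma1 0 S); [apply: on_tree_G1 | rewrite scale_Gamma1].
- by exists (Gamma2 0 S); [apply: on_tree_G2 | rewrite scale_Gamma2].
Qed.

Lemma on_tree_le a b T :
  on_tree a b T -> [/\ a <= T.1.1, T.1.1 <= T.1.2 & T.1.2 + a + b <= T.2].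
Proof. by elim=> [|[[t1 t2] t3] _ /= [*]|[[t1 t2] t3] _ /= [*]] /=; split; lia. Qed.

Lemma tmax_on_tree a b T : on_tree a b T -> tmax T = T.2.
Proof. by move=> /on_tree_le[*]; rewrite /tmax; lia. Qed.

Lemma on_tree_coprime S : on_tree 1 0 S -> coprime S.1.1 S.2 /\ coprime S.1.2 S.2.
Proof.
elim=> [|[[s1 s2] s3] _ /= [c1 c2]|[[s1 s2] s3] _ /= [c1 c2]] //=;
  rewrite /coprime addn0 gcdnDl gcdnDr [gcdn s3 _]gcdnC.
- by rewrite (eqP c2).
- by rewrite (eqP c1).
Qed.

Lemma scale_inj k : 0 < k -> injective (scale k).
Proof.
move=> k_gt0 [[s1 s2] s3] [[s1' s2'] s3'] [/eqP e1 /eqP e2 /eqP e3].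
by move: e1 e2 e3; rewrite !eqn_pmul2l // => /eqP-> /eqP-> /eqP->.
Qed.

(* The denominator of U.1.2 / U.2 in lowest terms: it recovers d from a triple of the
   (k,0)-tree with maximum k d. *)
Definition reduced_last (U : triple) : nat := U.2 %/ gcdn U.1.2 U.2.

Lemma reduced_last_scale k S :
  0 < k -> coprime S.1.2 S.2 -> reduced_last (scale k S) = S.2.
Proof.
by move=> k_gt0 /eqP cop; rewrite /reduced_last /= -muln_gcdr cop muln1 mulKn.
Qed.

Lemma tmax_shift b T : tmax (shift b T) = tmax T + b.
Proof. by rewrite /tmax /= !addn_maxl. Qed.

Lemma tmax_scale k S : tmax (scale k S) = k * tmax S.
Proof. by rewrite /tmax /= !maxnMr. Qed.

Lemma pbP (P : Prop) : reflect P (pb P).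
Proof. by rewrite /pb; case: excluded_middle_informative => h; constructor. Qed.

Definition triple_of n (x : 'I_n.+1 * 'I_n.+1 * 'I_n.+1) : triple :=
  (val x.1.1, val x.1.2, val x.2).
Definition ord_triple n (T : triple) : 'I_n.+1 * 'I_n.+1 * 'I_n.+1 :=
  (inord T.1.1, inord T.1.2, inord T.2).

Lemma triple_ofK n : cancel (@triple_of n) (@ord_triple n).
Proof. by case=> [[x1 x2] x3]; rewrite /ord_triple /= !inord_val. Qed.

Lemma ord_tripleK n T : tmax T <= n -> triple_of (ord_triple n T) = T.
Proof.
case: T => [[t1 t2] t3]; rewrite /tmax !geq_max /= => /and3P[h1 h2 h3].
by rewrite /triple_of /= !inordK.
Qed.

Lemma count_maxE P n :
  count_max P n = #|[set x : 'I_n.+1 * 'I_n.+1 * 'I_n.+1 |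
                      pb (P (triple_of x)) && (tmax (triple_of x) == n)]|.
Proof. by []. Qed.

Lemma count_max_bij (P Q : triple -> Prop) (g : triple -> triple) m n :
  (forall S S', P S -> P S' -> g S = g S' -> S = S') ->
  (forall T, Q T /\ tmax T = n <-> exists2 S, P S /\ tmax S = m & T = g S) ->
  count_max Q n = count_max P m.
Proof.
move=> g_inj gQ; rewrite !count_maxE.
set B := [set x | pb (P _) && _].
pose h (x : 'I_m.+1 * 'I_m.+1 * 'I_m.+1) := ord_triple n (g (triple_of x)).
have hB x :
    x \in B -> [/\ P (triple_of x), Q (g (triple_of x)) & tmax (g (triple_of x)) = n].
  rewrite inE => /andP[/pbP Px /eqP mx].
  have gx : exists2 S, P S /\ tmax S = m & g (triple_of x) = g S by exists (triple_of x).
  by case: ((gQ _).2 gx).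
have h_inj : {in B &, injective h}.
  move=> x y /hB[Px _ mx] /hB[Py _ my] /(congr1 (@triple_of n)).
  by rewrite !ord_tripleK ?mx ?my // => /(g_inj _ _ Px Py)/(can_inj (@triple_ofK m)).
rewrite -(card_in_imset h_inj); apply: eq_card => y; rewrite inE.
apply/andP/imsetP => [[/pbP Qy /eqP my]|[x /hB[_ Qx mx] ->]].
- have [S [PS mS] eS] := (gQ _).1 (conj Qy my).
  exists (ord_triple m S).
    by rewrite inE ord_tripleK ?mS //; apply/andP; split; [apply/pbP | apply/eqP].
  by rewrite /h ord_tripleK ?mS // -eS triple_ofK.
- by rewrite /h ord_tripleK ?mx //; split; [apply/pbP | apply/eqP].
Qed.

Lemma sum_eq_uniq_mem (s : seq nat) k :
  uniq s -> \sum_(d <- s) (k == d : nat) = (k \in s).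
Proof.
move=> s_uniq; rewrite -(count_uniq_mem k s_uniq) -sum1_count [RHS]big_mkcond /=.
by apply: eq_bigr => d _; rewrite eq_sym; case: eqP.
Qed.

Lemma card_fibers (I : finType) (A : {set I}) (f : I -> nat) (s : seq nat) :
  uniq s -> {in A, forall x, f x \in s} ->
  #|A| = \sum_(d <- s) #|[set x in A | f x == d]|.
Proof.
move=> s_uniq fA; rewrite -sum1_card.
transitivity (\sum_(x in A) \sum_(d <- s) (f x == d : nat)).
  by apply: eq_bigr => x /fA fx; rewrite sum_eq_uniq_mem ?fx.
rewrite exchange_big; apply: eq_bigr => d _.
rewrite -sum1_card big_mkcond [RHS]big_mkcond /=; apply: eq_bigr => x _.
by rewrite inE; case: (x \in A); case: (f x == d).
Qed.

Lemma count_max_partition (P : triple -> Prop) (f : triple -> nat) (s : seq nat)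
    (R : pred nat) n :
  uniq s -> (forall T, P T -> tmax T = n -> (f T \in s) && R (f T)) ->
  count_max P n = \sum_(d <- s | R d) count_max (fun T => P T /\ f T = d) n.
Proof.
move=> s_uniq fP; rewrite count_maxE -big_filter.
rewrite (card_fibers (f := fun x => f (triple_of x)) (filter_uniq R s_uniq)); last first.
  by move=> x; rewrite inE mem_filter => /andP[/pbP Px /eqP mx]; rewrite andbC fP.
apply: eq_bigr => d _; rewrite count_maxE; apply: eq_card => x; rewrite !inE.
rewrite andbAC; congr (_ && _).
apply/andP/pbP => [[/pbP Px /eqP fd] | [Px fd]]; first by [].
by split; [apply/pbP | apply/eqP].
Qed.

Lemma count_max_tree_small a b n : n < 2 * a + b -> count_max (on_tree a b) n = 0.
Proof.
move=> small; rewrite count_maxE; apply: eq_card0 => x; rewrite !inE.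
case: pbP => //= tx; apply/eqP => mx.
by have [? ? ?] := on_tree_le tx; move: mx; rewrite (tmax_on_tree tx); lia.
Qed.

Definition on_tree0_gt (b : nat) (U : triple) : Prop := exists2 k, b < k & on_tree k 0 U.

Lemma count_max_shift b n :
  count_max (fun T => exists alpha, 1 <= alpha /\ on_tree alpha b T) n =
  count_max (on_tree0_gt b) (n + b).
Proof.
symmetry; apply: (count_max_bij (g := shift b)).
  by move=> [[? ?] ?] [[? ?] ?] _ _ [*]; congr (_, _, _); lia.
move=> U; split=> [[[k bk tU] mU] | [T [[a [a_gt0 tT]] mT] ->]].
- have tU' : on_tree (k - b + b) 0 U by rewrite subnK // ltnW.
  have [T tT eU] := on_tree_unshift tU'.
  exists T => //; split; first by exists (k - b); split; first lia.
  by move: mU; rewrite eU tmax_shift; lia.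
- split; last by rewrite tmax_shift mT.
  by exists (a + b); [lia | apply: on_tree_shift].
Qed.

Lemma reduced_last_divisor b U : on_tree0_gt b U ->
  (reduced_last U \in divisors (tmax U)) && (b * reduced_last U < tmax U).
Proof.
move=> [k bk /on_tree_unscale[S tS ->]].
have [_ cop] := on_tree_coprime tS; have [? ? ?] := on_tree_le tS.
rewrite reduced_last_scale ?tmax_scale ?(tmax_on_tree tS) //; last by lia.
by rewrite -dvdn_divisors ?muln_gt0 ?dvdn_mull ?ltn_pmul2r //; lia.
Qed.

Lemma count_max_fiber b N d : d %| N -> b * d < N ->
  count_max (fun U => on_tree0_gt b U /\ reduced_last U = d) N =
  count_max (on_tree 1 0) d.
Proof.
move=> dN bdN; have d_gt0 : 0 < d by case: d dN bdN => //; rewrite dvd0n => /eqP->.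
set k := N %/ d.
have Nkd : N = k * d by rewrite divnK.
have bk : b < k by rewrite -(ltn_pmul2r d_gt0) -Nkd.
apply: (count_max_bij (g := scale k)).
  by move=> S S' _ _; apply: scale_inj; lia.
move=> U; split=> [[[[k' bk' tU] rU] mU] | [S [tS mS] ->]].
- have [S tS eU] := on_tree_unscale tU; have [_ cop] := on_tree_coprime tS.
  move: rU mU; rewrite eU reduced_last_scale ?tmax_scale ?(tmax_on_tree tS) //; last by lia.
  move=> Sd; rewrite Sd Nkd => /eqP; rewrite eqn_pmul2r // => /eqP k'k.
  by exists S; rewrite ?k'k ?(tmax_on_tree tS).
- have [_ cop] := on_tree_coprime tS; rewrite (tmax_on_tree tS) in mS.
  rewrite tmax_scale (tmax_on_tree tS) mS -Nkd reduced_last_scale //; last by lia.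
  by split=> //; split=> //; exists k => //; apply: on_tree_scale.
Qed.

Lemma E_count_max d : E d = count_max (on_tree 1 0) d + (d == 1).
Proof.
by rewrite /E; case: eqP => [->|_]; rewrite ?(count_max_tree_small (n := 1)) ?addn0.
Qed.

Theorem lemma3p3 (beta n : nat) (hn : 0 < n) :
  C beta n = \sum_(d <- divisors (n + beta) | beta * d < n + beta) E d.
Proof.
rewrite /C count_max_shift.
rewrite (count_max_partition (f := reduced_last) (R := fun d => beta * d < n + beta)
  (divisors_uniq (n + beta))); last by move=> U tU <-; apply: reduced_last_divisor.
rewrite big_seq_cond [X in X + 1](eq_bigr (fun d => count_max (on_tree 1 0) d)); last first.
  by move=> d /andP[]; rewrite -dvdn_divisors ?addn_gt0 ?hn //; apply: count_max_fiber.
under [RHS]eq_bigr do rewrite E_count_max eq_sym.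
rewrite -big_seq_cond big_split /=; congr (_ + _).
rewrite -big_filter sum_eq_uniq_mem ?filter_uniq ?divisors_uniq //.
by rewrite mem_filter /= muln1 -dvdn_divisors ?dvd1n ?addn_gt0 ?hn //; lia.
Qed.
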